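(* If $X$ is a core compact well-filtered space, then the upper Vietoris topology and the Scott topology on $\mathsf{K}(X)$ coincide.
   Context: Spaces are $T_0$; specialization order $x\le y$ iff $x\in\overline{\{y\}}$; saturated = upper set. $\mathsf{K}(X)$ = nonempty compact saturated subsets ordered by reverse inclusion. Scott topology on a poset: upper sets $U$ such that every directed $D$ whose supremum exists and lies in $U$ meets $U$. Upper Vietoris topology on $\mathsf{K}(X)$: base $\Box U=\{K:K\subseteq U\}$, $U$ open. Well-filtered: for open $U$ and $\mathcal K\subseteq\mathsf{K}(X)$ filtered under inclusion, $\bigcap\mathcal K\subseteq U$ implies some $K\in\mathcal K$ lies in $U$. Core compact: the lattice of open sets of $X$ is a continuous lattice. *)

From Stdlib Require Import List.

Set Implicit Arguments.

Definition subset {A : Type} (P Q : A -> Prop) : Prop := forall a, P a -> Q a.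

Definition is_topology {X : Type} (O : (X -> Prop) -> Prop) : Prop :=
  O (fun _ => True) /\
  (forall U V, O U -> O V -> O (fun x => U x /\ V x)) /\
  (forall F : (X -> Prop) -> Prop, (forall U, F U -> O U) ->
     O (fun x => exists U, F U /\ U x)).

Definition T0 {X : Type} (O : (X -> Prop) -> Prop) : Prop :=
  forall x y, (forall U, O U -> (U x <-> U y)) -> x = y.

Definition closure {X : Type} (O : (X -> Prop) -> Prop) (A : X -> Prop) (x : X) : Prop :=
  forall U, O U -> U x -> exists y, U y /\ A y.

Definition spec_le {X : Type} (O : (X -> Prop) -> Prop) (x y : X) : Prop :=
  closure O (fun z => z = y) x.

Definition saturated {X : Type} (O : (X -> Prop) -> Prop) (A : X -> Prop) : Prop :=
  forall x y, A x -> spec_le O x y -> A y.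

Definition compact {X : Type} (O : (X -> Prop) -> Prop) (K : X -> Prop) : Prop :=
  forall F : (X -> Prop) -> Prop, (forall U, F U -> O U) ->
    subset K (fun x => exists U, F U /\ U x) ->
    exists l : list (X -> Prop), (forall U, In U l -> F U) /\
      subset K (fun x => exists U, In U l /\ U x).

Definition KX {X : Type} (O : (X -> Prop) -> Prop) (K : X -> Prop) : Prop :=
  (exists x, K x) /\ compact O K /\ saturated O K.

Definition K_le {X : Type} (K1 K2 : X -> Prop) : Prop := subset K2 K1.

(* Subsets of K(X) are predicates on (X -> Prop), meant to be contained in KX O. *)

(* Upper Vietoris topology: generated by the base Box U = {K in K(X) | K ⊆ U}, U open;
   a set is open iff it is a union of basic open sets. *)
Definition upper_vietoris_open {X : Type} (O : (X -> Prop) -> Prop)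
    (W : (X -> Prop) -> Prop) : Prop :=
  subset W (KX O) /\
  forall K, W K -> exists U, O U /\ subset K U /\
    (forall K', KX O K' -> subset K' U -> W K').

Definition directed_K {X : Type} (O : (X -> Prop) -> Prop) (D : (X -> Prop) -> Prop) : Prop :=
  subset D (KX O) /\ (exists K, D K) /\
  forall K1 K2, D K1 -> D K2 -> exists K3, D K3 /\ K_le K1 K3 /\ K_le K2 K3.

Definition is_sup_K {X : Type} (O : (X -> Prop) -> Prop) (D : (X -> Prop) -> Prop)
    (S : X -> Prop) : Prop :=
  KX O S /\ (forall K, D K -> K_le K S) /\
  (forall S', KX O S' -> (forall K, D K -> K_le K S') -> K_le S S').

Definition scott_open_K {X : Type} (O : (X -> Prop) -> Prop)
    (W : (X -> Prop) -> Prop) : Prop :=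
  subset W (KX O) /\
  (forall K1 K2, W K1 -> KX O K2 -> K_le K1 K2 -> W K2) /\
  (forall D S, directed_K O D -> is_sup_K O D S -> W S -> exists K, D K /\ W K).

Definition well_filtered {X : Type} (O : (X -> Prop) -> Prop) : Prop :=
  forall (U : X -> Prop) (F : (X -> Prop) -> Prop),
    O U -> subset F (KX O) ->
    (exists K, F K) ->
    (forall K1 K2, F K1 -> F K2 -> exists K3, F K3 /\ subset K3 K1 /\ subset K3 K2) ->
    subset (fun x => forall K, F K -> K x) U ->
    exists K, F K /\ subset K U.

Definition way_below {X : Type} (O : (X -> Prop) -> Prop) (U V : X -> Prop) : Prop :=
  forall F : (X -> Prop) -> Prop,
    (forall W, F W -> O W) ->
    (exists W, F W) ->
    (forall W1 W2, F W1 -> F W2 -> exists W3, F W3 /\ subset W1 W3 /\ subset W2 W3) ->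
    subset V (fun x => exists W, F W /\ W x) ->
    exists W, F W /\ subset U W.

(* core compact: the open-set lattice is continuous, i.e. every open V is the
   (directed) join, i.e. union, of the opens way below it *)
Definition core_compact {X : Type} (O : (X -> Prop) -> Prop) : Prop :=
  forall V, O V -> forall x, V x -> exists U, O U /\ way_below O U V /\ U x.

(* In a well-filtered space the intersection of a filtered family of compact saturated
   sets is compact saturated; it is the supremum of the family in K(X), and
   well-filteredness moves a box around it down to a member, so upper Vietoris opens are
   Scott open.  Conversely, core compact well-filtered spaces are locally compact: below
   an open V containing a compact K, interpolation gives opens K ⊆ ... << W_2 << W_1 << V,
   and every open superset of Q = ⋂ W_n contains some W_n (a Zorn argument against
   well-filteredness), which makes Q compact.  The compact saturated neighbourhoods of K
   thus form a directed family with supremum K; a Scott open set containing K contains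
   one of them, hence a box around K. *)

From Stdlib Require Import List Arith Lia Classical ClassicalEpsilon.
From Stdlib Require Import FunctionalExtensionality PropExtensionality.
From mathcomp Require classical_sets.

Lemma zorn_chain_unions (T : Type) (P : (T -> Prop) -> Prop) :
  (forall F : (T -> Prop) -> Prop, (forall A, F A -> P A) ->
     (forall A B, F A -> F B -> subset A B \/ subset B A) ->
     P (fun x => exists A, F A /\ A x)) ->
  exists A, P A /\ forall B, subset A B -> ~ subset B A -> ~ P B.
Proof.
  intros Hchain.
  destruct (@classical_sets.Zorn_bigcup T P) as [A [HA Hmax]].
  - intros F HF Htot.
    replace (classical_sets.bigcup F (fun A => A)) with (fun x => exists A, F A /\ A x).
    + exact (Hchain F HF Htot).
    + apply functional_extensionality; intro x; apply propositional_extensionality.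
      split; [intros [A [HFA HAx]]; exists A | intros [A HFA HAx]]; eauto.
  - exists A; split; [exact HA |].
    intros B HAB HBA; apply Hmax; split; assumption.
Qed.

Lemma finite_cover_segment (T : Type) (f : nat -> T) (F : (T -> Prop) -> Prop) N :
  (forall n, N <= n -> exists U, F U /\ U (f n)) ->
  forall m, exists l, (forall U, In U l -> F U) /\
    forall n, N <= n -> n < m -> exists U, In U l /\ U (f n).
Proof.
  intros Hcov m; induction m as [| m [l [Hl Hlcov]]].
  - exists nil; split; [intros U [] | intros n _ Hn; lia].
  - destruct (le_lt_dec N m) as [HNm | HmN].
    + destruct (Hcov m HNm) as [Um [HUm HUmx]].
      exists (Um :: l); split; [intros U [<- | HU]; auto |].
      intros n HNn Hnm; destruct (Nat.eq_dec n m) as [-> | Hne].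
      * exists Um; split; [left |]; auto.
      * destruct (Hlcov n HNn) as [U [HU HUx]]; [lia |].
        exists U; split; [right |]; auto.
    + exists l; split; [exact Hl |]; intros n HNn Hnm; apply Hlcov; lia.
Qed.

Section Topology.

Variables (X : Type) (O : (X -> Prop) -> Prop).
Hypothesis Htop : is_topology O.

Lemma open_ext U V : O U -> (forall x, U x <-> V x) -> O V.
Proof.
  intros HU HUV; replace V with U; [exact HU |].
  apply functional_extensionality; intro x; apply propositional_extensionality; auto.
Qed.

Lemma open_full : O (fun _ => True).
Proof. apply Htop. Qed.

Lemma open_inter U V : O U -> O V -> O (fun x => U x /\ V x).
Proof. apply Htop. Qed.

Lemma open_union (F : (X -> Prop) -> Prop) :
  (forall U, F U -> O U) -> O (fun x => exists U, F U /\ U x).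
Proof. apply Htop. Qed.

Lemma open_empty : O (fun _ => False).
Proof.
  apply open_ext with (fun x => exists U : X -> Prop, False /\ U x).
  - apply open_union; tauto.
  - firstorder.
Qed.

Lemma open_union2 U V : O U -> O V -> O (fun x => U x \/ V x).
Proof.
  intros HU HV.
  apply open_ext with (fun x => exists W, (W = U \/ W = V) /\ W x).
  - apply open_union; intros W [-> | ->]; assumption.
  - intro x; split.
    + intros [W [[-> | ->] Hx]]; auto.
    + intros [Hx | Hx]; eauto.
Qed.

Lemma spec_le_refl x : spec_le O x x.
Proof. intros U _ Hx; eauto. Qed.

Lemma open_spec_le U x y : O U -> U x -> spec_le O x y -> U y.
Proof. intros HU Hx Hxy; destruct (Hxy U HU Hx) as [z [Hz ->]]; exact Hz. Qed.

Lemma spec_le_trans x y z : spec_le O x y -> spec_le O y z -> spec_le O x z.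
Proof.
  intros Hxy Hyz U HU Hx; exists z; split; [| reflexivity].
  apply (open_spec_le U y); [assumption | | assumption].
  apply (open_spec_le U x); assumption.
Qed.

Lemma saturated_open_separation K x : saturated O K -> ~ K x ->
  exists V, O V /\ subset K V /\ ~ V x.
Proof.
  intros HK Hx.
  exists (fun y => exists U, (O U /\ ~ U x) /\ U y); split; [| split].
  - apply open_union; intros U [HU _]; exact HU.
  - intros k Hk.
    assert (Hkx : ~ spec_le O k x) by (intro Hkx; apply Hx, (HK k); assumption).
    apply not_all_ex_not in Hkx as [U HU].
    apply imply_to_and in HU as [HUo HU].
    apply imply_to_and in HU as [HUk HU].
    exists U; split; [split |]; [assumption | | assumption].
    intro HUx; apply HU; exists x; auto.
  - intros [U [[_ HUx] HU]]; contradiction.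
Qed.

Lemma way_below_subset U V : O V -> way_below O U V -> subset U V.
Proof.
  intros HV HUV.
  destruct (HUV (fun W => W = V)) as [W [-> HW]]; [intros W ->; exact HV | eauto | | |].
  - intros W1 W2 -> ->; exists V; split; [reflexivity | split; intros x Hx; exact Hx].
  - intros x Hx; eauto.
  - exact HW.
Qed.

Lemma way_below_mono U' U V V' :
  subset U' U -> subset V V' -> way_below O U V -> way_below O U' V'.
Proof.
  intros HU' HV' HUV F HF Hne Hdir Hcov.
  destruct (HUV F HF Hne Hdir) as [W [HW HUW]]; [intros x Hx; apply Hcov, HV', Hx |].
  exists W; split; [exact HW | intros x Hx; apply HUW, HU', Hx].
Qed.

Lemma way_below_empty V : way_below O (fun _ => False) V.
Proof. intros F _ [W HW] _ _; exists W; split; [exact HW | intros x []]. Qed.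

Lemma way_below_union2 U1 U2 V :
  way_below O U1 V -> way_below O U2 V -> way_below O (fun x => U1 x \/ U2 x) V.
Proof.
  intros H1 H2 F HF Hne Hdir Hcov.
  destruct (H1 F HF Hne Hdir Hcov) as [W1 [HW1 S1]].
  destruct (H2 F HF Hne Hdir Hcov) as [W2 [HW2 S2]].
  destruct (Hdir W1 W2 HW1 HW2) as [W3 [HW3 [T1 T2]]].
  exists W3; split; [exact HW3 | intros x [Hx | Hx]; auto].
Qed.

Lemma way_below_list_union V (l : list (X -> Prop)) :
  (forall U, In U l -> way_below O U V) ->
  way_below O (fun x => exists U, In U l /\ U x) V.
Proof.
  induction l as [| U l IH]; intros Hl.
  - apply (way_below_mono _ (fun _ => False) V); [intros x [U [[] _]] | intros x Hx; exact Hx |].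
    apply way_below_empty.
  - apply (way_below_mono _ (fun x => U x \/ exists U, In U l /\ U x) V).
    + intros x [W [[-> | HW] Hx]]; [left | right; exists W]; auto.
    + intros x Hx; exact Hx.
    + apply way_below_union2; [apply Hl; left; reflexivity |].
      apply IH; intros W HW; apply Hl; right; exact HW.
Qed.


Section Tails.

Variable b : nat -> X.
Hypothesis Hb_eventually :
  forall U k, O U -> U (b k) -> exists n0, forall n, n0 <= n -> U (b n).

Definition tail_upset N (x : X) : Prop := exists n, N <= n /\ spec_le O (b n) x.

Lemma tail_upset_KX N : KX O (tail_upset N).
Proof.
  assert (HbN : tail_upset N (b N)) by (exists N; split; [lia | apply spec_le_refl]).
  split; [exists (b N); exact HbN | split].
  - intros F HF Hcov.
    destruct (Hcov (b N) HbN) as [U0 [HU0 HU0b]].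
    destruct (Hb_eventually U0 N (HF U0 HU0) HU0b) as [n0 Hn0].
    destruct (finite_cover_segment _ b F N) with (m := n0) as [l [Hl Hlcov]].
    { intros n HNn; apply Hcov; exists n; split; [exact HNn | apply spec_le_refl]. }
    exists (U0 :: l); split; [intros U [<- | HU]; auto |].
    intros x [n [HNn Hbx]]; destruct (le_lt_dec n0 n) as [Hn | Hn].
    + exists U0; split; [left; reflexivity |].
      exact (open_spec_le U0 (b n) x (HF U0 HU0) (Hn0 n Hn) Hbx).
    + destruct (Hlcov n HNn Hn) as [U [HUl HUb]].
      exists U; split; [right; exact HUl |].
      exact (open_spec_le U (b n) x (HF U (Hl U HUl)) HUb Hbx).
  - intros x y [n [HNn Hbx]] Hxy; exists n; split; [exact HNn |].
    exact (spec_le_trans _ _ _ Hbx Hxy).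
Qed.

End Tails.

Section WellFiltered.

Hypothesis Hwf : well_filtered O.

Lemma filtered_inter_KX (D : (X -> Prop) -> Prop) :
  subset D (KX O) -> (exists K, D K) ->
  (forall K1 K2, D K1 -> D K2 -> exists K3, D K3 /\ subset K3 K1 /\ subset K3 K2) ->
  KX O (fun x => forall K, D K -> K x).
Proof.
  intros HDK HDne HDfil; split; [| split].
  - apply NNPP; intro Hempty.
    destruct (Hwf (fun _ => False) D open_empty HDK HDne HDfil) as [K [HK HKempty]].
    + intros x Hx; apply Hempty; exists x; exact Hx.
    + destruct (HDK K HK) as [[x Hx] _]; exact (HKempty x Hx).
  - intros F HF Hcov.
    destruct (Hwf _ D (open_union F HF) HDK HDne HDfil Hcov) as [K [HK HKF]].
    destruct (proj1 (proj2 (HDK K HK)) F HF HKF) as [l [Hl Hlcov]].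
    exists l; split; [exact Hl |]; intros x Hx; apply Hlcov, Hx, HK.
  - intros x y Hx Hxy K HK; exact (proj2 (proj2 (HDK K HK)) x y (Hx K HK) Hxy).
Qed.

Lemma upper_vietoris_open_scott_open W : upper_vietoris_open O W -> scott_open_K O W.
Proof.
  intros [HWK Hbox]; split; [exact HWK | split].
  - intros K1 K2 HK1 HK2 H12; destruct (Hbox K1 HK1) as [U [HU [HK1U HUW]]].
    apply HUW; [exact HK2 | intros x Hx; apply HK1U, H12, Hx].
  - intros D S [HDK [HDne HDdir]] [_ [_ HSleast]] HS.
    destruct (Hbox S HS) as [U [HU [HSU HUW]]].
    assert (HIS : subset (fun x => forall K, D K -> K x) S).
    { apply HSleast; [exact (filtered_inter_KX D HDK HDne HDdir) |].
      intros K HK x Hx; apply Hx, HK. }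
    destruct (Hwf U D HU HDK HDne HDdir) as [K [HK HKU]]; [intros x Hx; apply HSU, HIS, Hx |].
    exists K; split; [exact HK | apply HUW; [apply HDK, HK | exact HKU]].
Qed.

Section Chain.

Variable Wn : nat -> X -> Prop.
Hypothesis HWn_open : forall n, O (Wn n).
Hypothesis HWn_way_below : forall n, way_below O (Wn (S n)) (Wn n).

Lemma chain_antitone n m : n <= m -> subset (Wn m) (Wn n).
Proof.
  induction 1 as [| m _ IH]; intros x Hx; [exact Hx |].
  apply IH, (way_below_subset (Wn (S m))); auto.
Qed.

Definition avoids_chain (V : X -> Prop) : Prop := O V /\ forall n, ~ subset (Wn n) V.

Lemma avoids_chain_union G (F : (X -> Prop) -> Prop) :
  avoids_chain G ->
  (forall A, F A -> avoids_chain (fun x => A x \/ G x)) ->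
  (forall A B, F A -> F B -> subset A B \/ subset B A) ->
  avoids_chain (fun x => (exists A, F A /\ A x) \/ G x).
Proof.
  intros [HGo HG] HF Htot.
  pose (Fam := fun B => B = G \/ exists A, F A /\ B = (fun x => A x \/ G x)).
  assert (HFam_avoids : forall B, Fam B -> avoids_chain B)
    by (intros B [-> | [A [HA ->]]]; [split | apply HF]; auto).
  assert (HFam_total : forall B1 B2, Fam B1 -> Fam B2 -> subset B1 B2 \/ subset B2 B1).
  { intros B1 B2 [-> | [A1 [HA1 ->]]] [-> | [A2 [HA2 ->]]];
      try (left; intros x Hx; tauto); try (right; intros x Hx; tauto).
    destruct (Htot A1 A2 HA1 HA2) as [H12 | H21]; [left | right];
      intros x [Hx | Hx]; auto. }
  assert (Hunion : forall x, (exists B, Fam B /\ B x) <-> (exists A, F A /\ A x) \/ G x).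
  { intro x; split.
    - intros [B [[-> | [A [HA ->]]] Hx]]; [right | destruct Hx; [left |right]]; eauto.
    - intros [[A [HA Hx]] | Hx].
      + exists (fun y => A y \/ G y); split; [right |]; eauto.
      + exists G; split; [left |]; auto. }
  split.
  - apply (open_ext (fun x => exists B, Fam B /\ B x)); [| exact Hunion].
    apply open_union; intros B HB; apply HFam_avoids, HB.
  - intros n Hsub.
    destruct (HWn_way_below n Fam) as [B [HB HBsub]].
    + intros B HB; apply HFam_avoids, HB.
    + exists G; left; reflexivity.
    + intros B1 B2 HB1 HB2; destruct (HFam_total B1 B2 HB1 HB2);
        [exists B2 | exists B1]; repeat split; auto; intros x Hx; exact Hx.
    + intros x Hx; apply Hunion, Hsub, Hx.
    + exact (proj2 (HFam_avoids B HB) (S n) HBsub).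
Qed.

Lemma exists_maximal_avoids_chain G : avoids_chain G ->
  exists P, avoids_chain P /\ subset G P /\
    forall U x, O U -> U x -> ~ P x -> exists n, subset (Wn n) (fun y => P y \/ U y).
Proof.
  intros HG.
  (* Zorn runs over sets [A] with [A ∪ G] avoiding, so that the empty chain is harmless. *)
  destruct (zorn_chain_unions _ (fun A => avoids_chain (fun x => A x \/ G x)))
    as [A [[HAo HA] Hmax]].
  { intros F HF Htot; exact (avoids_chain_union G F HG HF Htot). }
  exists (fun x => A x \/ G x); split; [split; assumption | split; [intros x Hx; auto |]].
  intros U x HU HUx HAx.
  apply NNPP; intro Hnone.
  apply (Hmax (fun y => A y \/ U y)); [intros y Hy; auto | intro HUA; apply HAx; auto |].
  split.
  - apply (open_ext (fun y => (A y \/ G y) \/ U y)); [apply open_union2; auto | tauto].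
  - intros n Hn; apply Hnone; exists n; intros y Hy; destruct (Hn y Hy) as [[? | ?] | ?]; auto.
Qed.

(* Zorn gives an open [P] containing [G], maximal among opens containing no [Wn n];
   points [b n] of [Wn n] outside [P] then have compact tail upsets whose intersection
   lies in the intersection of the [Wn n], so well-filteredness forces a contradiction. *)
Lemma chain_open_nbhd G : O G -> subset (fun x => forall n, Wn n x) G ->
  exists n, subset (Wn n) G.
Proof.
  intros HG HinterG; apply NNPP; intro Hnone.
  destruct (exists_maximal_avoids_chain G) as [P [[HPo HP] [HGP HPmax]]].
  { split; [exact HG | intros n Hn; apply Hnone; exists n; exact Hn]. }
  assert (Hpoint : forall n, exists x, Wn n x /\ ~ P x).
  { intro n; apply NNPP; intro Hno; apply (HP n); intros x Hx.
    apply NNPP; intro HPx; apply Hno; exists x; split; assumption. }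
  destruct (choice _ Hpoint) as [b Hb].
  assert (Hb_eventually : forall U k, O U -> U (b k) -> exists n0, forall n, n0 <= n -> U (b n)).
  { intros U k HU HUb.
    destruct (HPmax U (b k) HU HUb (proj2 (Hb k))) as [n0 Hn0]; exists n0; intros n Hn.
    destruct (Hn0 (b n) (chain_antitone n0 n Hn _ (proj1 (Hb n)))) as [HPb | HUbn];
      [destruct (proj2 (Hb n) HPb) | exact HUbn]. }
  destruct (Hwf P (fun K => exists N, K = tail_upset b N)) as [K [[N ->] HKP]].
  - exact HPo.
  - intros K [N ->]; apply tail_upset_KX, Hb_eventually.
  - exists (tail_upset b 0), 0; reflexivity.
  - intros K1 K2 [N1 ->] [N2 ->]; exists (tail_upset b (max N1 N2)).
    split; [eauto | split; intros x [n [Hn Hbx]]; exists n; split; auto; lia].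
  - intros x Hx; apply HGP, HinterG; intro N.
    destruct (Hx _ (ex_intro _ N eq_refl)) as [n [HNn Hbx]].
    apply (chain_antitone N n HNn), (open_spec_le (Wn n) (b n) x (HWn_open n) (proj1 (Hb n)) Hbx).
  - apply (proj2 (Hb N)), HKP; exists N; split; [lia | apply spec_le_refl].
Qed.

Lemma chain_inter_compact : compact O (fun x => forall n, Wn n x).
Proof.
  intros F HF Hcov.
  destruct (chain_open_nbhd _ (open_union F HF) Hcov) as [n Hn].
  pose (Fin := fun W => exists l, (forall U, In U l -> F U) /\
                                 W = (fun x => exists U, In U l /\ U x)).
  destruct (HWn_way_below n Fin) as [W [[l [Hl ->]] HW]].
  - intros W [l [Hl ->]]; apply open_union; intros U HU; apply HF, Hl, HU.
  - exists (fun x => exists U, In U nil /\ U x), nil; split; [intros U [] | reflexivity].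
  - intros W1 W2 [l1 [Hl1 ->]] [l2 [Hl2 ->]].
    exists (fun x => exists U, In U (l1 ++ l2) /\ U x); split.
    + exists (l1 ++ l2); split; [| reflexivity].
      intros U HU; apply in_app_or in HU as [HU | HU]; auto.
    + split; intros x [U [HU HUx]]; exists U; split; auto; apply in_or_app; auto.
  - intros x Hx; destruct (Hn x Hx) as [U [HU HUx]].
    exists (fun y => exists V, In V (U :: nil) /\ V y); split.
    + exists (U :: nil); split; [intros V [<- | []]; exact HU | reflexivity].
    + exists U; split; [left |]; auto.
  - exists l; split; [exact Hl | intros x Hx; apply HW, Hx].
Qed.

End Chain.

Section CoreCompact.

Hypothesis Hcc : core_compact O.

Lemma compact_way_below_nbhd K V : compact O K -> O V -> subset K V ->
  exists U, O U /\ subset K U /\ way_below O U V.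
Proof.
  intros HK HV HKV.
  destruct (HK (fun U => O U /\ way_below O U V)) as [l [Hl Hlcov]].
  - intros U [HU _]; exact HU.
  - intros x Hx; destruct (Hcc V HV x (HKV x Hx)) as [U [HU [HUV Hx']]]; eauto.
  - exists (fun x => exists U, In U l /\ U x); split; [| split; [exact Hlcov |]].
    + apply open_union; intros U HU; apply Hl, HU.
    + apply way_below_list_union; intros U HU; apply Hl, HU.
Qed.

(* Core compactness applied twice shows that the opens [W'] with [W' << W << V] for
   some open [W] form a directed cover of [V]. *)
Lemma way_below_interpolate U V : O V -> way_below O U V ->
  exists W, O W /\ way_below O U W /\ way_below O W V.
Proof.
  intros HV HUV.
  destruct (HUV (fun W' => O W' /\ exists W, O W /\ way_below O W' W /\ way_below O W V))
    as [W' [[HW' [W [HW [HW'W HWV]]]] HUW']].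
  - intros W [HW _]; exact HW.
  - exists (fun _ => False); split; [exact open_empty |].
    exists (fun _ => False); split; [exact open_empty | split; apply way_below_empty].
  - intros W1 W2 [HO1 [V1 [HV1 [A1 B1]]]] [HO2 [V2 [HV2 [A2 B2]]]].
    exists (fun x => W1 x \/ W2 x); split; [split; [apply open_union2; assumption |] | split;
      intros x Hx; auto].
    exists (fun x => V1 x \/ V2 x); split; [apply open_union2; assumption |].
    split; apply way_below_union2; auto;
      [apply (way_below_mono W1 W1 V1) | apply (way_below_mono W2 W2 V2)];
      auto; intros x Hx; auto.
  - intros x Hx.
    destruct (Hcc V HV x Hx) as [W [HW [HWV HWx]]].
    destruct (Hcc W HW x HWx) as [W' [HW' [HW'W HW'x]]].
    exists W'; split; [split; [exact HW' | exists W; auto] | exact HW'x].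
  - exists W; split; [exact HW | split; [| exact HWV]].
    apply (way_below_mono U W' W W); [exact HUW' | intros x Hx; exact Hx | exact HW'W].
Qed.

Lemma way_below_chain U V : O V -> way_below O U V ->
  exists Wn : nat -> X -> Prop, Wn 0 = V /\ (forall n, O (Wn n)) /\
    (forall n, way_below O (Wn (S n)) (Wn n)) /\ (forall n, subset U (Wn n)).
Proof.
  intros HV HUV.
  pose (Above := {W : X -> Prop | O W /\ way_below O U W}).
  assert (Hstep : forall A : Above, exists A' : Above, way_below O (proj1_sig A') (proj1_sig A)).
  { intros [W [HW HUW]]; destruct (way_below_interpolate U W HW HUW) as [W' [HW' [HUW' HW'W]]].
    exists (exist _ W' (conj HW' HUW')); exact HW'W. }
  destruct (choice _ Hstep) as [next Hnext].
  pose (start := exist (fun W => O W /\ way_below O U W) V (conj HV HUV) : Above).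
  exists (fun n => proj1_sig (Nat.iter n next start)); split; [reflexivity | split; [| split]].
  - intro n; exact (proj1 (proj2_sig (Nat.iter n next start))).
  - intro n; apply Hnext.
  - intro n; destruct (proj2_sig (Nat.iter n next start)) as [HW HUW].
    exact (way_below_subset U _ HW HUW).
Qed.

Definition compact_nbhd (K Q : X -> Prop) : Prop :=
  KX O Q /\ exists U, O U /\ subset K U /\ subset U Q.

Lemma locally_compact K V : KX O K -> O V -> subset K V ->
  exists Q, compact_nbhd K Q /\ subset Q V.
Proof.
  intros [[x Kx] [HKc _]] HV HKV.
  destruct (compact_way_below_nbhd K V HKc HV HKV) as [U [HU [HKU HUV]]].
  destruct (way_below_chain U V HV HUV) as [Wn [HW0 [HWo [HWwb HUW]]]].
  exists (fun x => forall n, Wn n x); split; [split; [split; [| split] | exists U] |].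
  - exists x; intro n; apply HUW, HKU, Kx.
  - exact (chain_inter_compact Wn HWo HWwb).
  - intros y z Hy Hyz n; exact (open_spec_le (Wn n) y z (HWo n) (Hy n) Hyz).
  - split; [exact HU | split; [exact HKU | intros y Hy n; apply HUW, Hy]].
  - intros y Hy; rewrite <- HW0; apply Hy.
Qed.

Lemma compact_nbhd_directed K : KX O K -> directed_K O (compact_nbhd K).
Proof.
  intros HK; split; [intros Q [HQ _]; exact HQ | split].
  - destruct (locally_compact K (fun _ => True) HK open_full) as [Q [HQ _]];
      [intros x _; exact I | eauto].
  - intros Q1 Q2 [_ [U1 [HU1 [HKU1 HU1Q]]]] [_ [U2 [HU2 [HKU2 HU2Q]]]].
    destruct (locally_compact K (fun x => U1 x /\ U2 x) HK (open_inter U1 U2 HU1 HU2))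
      as [Q [HQ HQU]]; [intros x Hx; split; auto |].
    exists Q; split; [exact HQ | split; intros x Hx; destruct (HQU x Hx); auto].
Qed.

Lemma compact_nbhd_sup K : KX O K -> is_sup_K O (compact_nbhd K) K.
Proof.
  intros HK; split; [exact HK | split].
  - intros Q [_ [U [_ [HKU HUQ]]]] x Hx; apply HUQ, HKU, Hx.
  - intros S HS Hub x Hx; apply NNPP; intro HKx.
    destruct (saturated_open_separation K x (proj2 (proj2 HK)) HKx) as [V [HV [HKV HVx]]].
    destruct (locally_compact K V HK HV HKV) as [Q [HQ HQV]].
    apply HVx, HQV, (Hub Q HQ), Hx.
Qed.

Lemma scott_open_upper_vietoris_open W : scott_open_K O W -> upper_vietoris_open O W.
Proof.
  intros [HWK [HWup HWscott]]; split; [exact HWK |].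
  intros K HK.
  destruct (HWscott (compact_nbhd K) K) as [Q [[_ [U [HU [HKU HUQ]]]] HQ]];
    [apply compact_nbhd_directed, HWK, HK | apply compact_nbhd_sup, HWK, HK | exact HK |].
  exists U; split; [exact HU | split; [exact HKU |]].
  intros K' HK' HK'U; apply (HWup Q K' HQ HK'); intros x Hx; apply HUQ, HK'U, Hx.
Qed.

End CoreCompact.

End WellFiltered.

End Topology.

Theorem mainTheorem18 (X : Type) (O : (X -> Prop) -> Prop) :
  is_topology O -> T0 O -> core_compact O -> well_filtered O ->
  forall W : (X -> Prop) -> Prop, subset W (KX O) ->
    (upper_vietoris_open O W <-> scott_open_K O W).
Proof.
  intros Htop _ Hcc Hwf W _; split.
  - exact (upper_vietoris_open_scott_open X O Htop Hwf W).
  - exact (scott_open_upper_vietoris_open X O Htop Hwf Hcc W).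
Qed.
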